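(* Let $\mathcal{C}$ be a deflation-exact category and $\mathcal{A}$ an admissibly deflation-percolating subcategory. (1) Consider a commutative diagram $$\begin{array}{ccccc} X&\rightarrowtail&Y&\twoheadrightarrow&Z\\ \downarrow{\scriptstyle f}&&\downarrow{\scriptstyle g}&&\downarrow{\scriptstyle h}\\ X'&\rightarrowtail&Y'&\twoheadrightarrow&Z'\end{array}$$ whose rows are conflations and where $f$ and $h$ are inflations. (a) If $f$ is an $\mathcal{A}^{-1}$-inflation, then $g$ is an inflation. (b) If additionally $h$ is an $\mathcal{A}^{-1}$-inflation, then $g$ is an $\mathcal{A}^{-1}$-inflation. (2) Consider a commutative diagram of the same shape whose rows are conflations and where $f$ and $h$ are deflations. (a) If $f$ is an $\mathcal{A}^{-1}$-deflation, then $g$ is a deflation. (b) If additionally $h$ is an $\mathcal{A}^{-1}$-deflation, then $g$ is an $\mathcal{A}^{-1}$-deflation.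
   Context: A conflation category is an additive category with a class of kernel-cokernel pairs (closed under isomorphisms) called conflations; first map an inflation, second a deflation. A deflation-exact category is a conflation category satisfying: (R0) $1_0$ is a deflation; (R1) composites of deflations are deflations; (R2) pullbacks of deflations along arbitrary morphisms exist and are deflations. A non-empty full subcategory $\mathcal{A}$ is admissibly deflation-percolating if: (A1) for every conflation $A'\rightarrowtail A\twoheadrightarrow A''$, $A\in\mathcal{A}$ iff $A',A''\in\mathcal{A}$; (A2) every morphism $C\to A$ with $A\in\mathcal{A}$ factors as a deflation $C\twoheadrightarrow A'$ followed by an inflation $A'\rightarrowtail A$ with $A'\in\mathcal{A}$; (A3) if $a\colon C\rightarrowtail D$ is an inflation and $b\colon C\twoheadrightarrow A$ a deflation with $A\in\mathcal{A}$, the pushout of $a$ along $b$ exists and yields a deflation $D\twoheadrightarrow P$ and an inflation $A\rightarrowtail P$. An $\mathcal{A}^{-1}$-inflation is an inflation with cokernel in $\mathcal{A}$; an $\mathcal{A}^{-1}$-deflation is a deflation with kernel in $\mathcal{A}$. *)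

From HB Require Import structures.
From mathcomp Require Import all_boot all_algebra.
Set Implicit Arguments. Unset Strict Implicit. Unset Printing Implicit Defensive.
Import GRing.Theory.
Local Open Scope ring_scope.

Record PreAdditive := {
  obj : Type;
  mor : obj -> obj -> zmodType;
  idm : forall a, mor a a;
  comp : forall a b c, mor b c -> mor a b -> mor a c;
  compA : forall a b c d (h : mor c d) (g : mor b c) (f : mor a b),
      comp h (comp g f) = comp (comp h g) f;
  comp1m : forall a b (f : mor a b), comp (idm b) f = f;
  compm1 : forall a b (f : mor a b), comp f (idm a) = f;
  compDl : forall a b c (g1 g2 : mor b c) (f : mor a b),
      comp (g1 + g2) f = comp g1 f + comp g2 f;
  compDr : forall a b c (g : mor b c) (f1 f2 : mor a b),
      comp g (f1 + f2) = comp g f1 + comp g f2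
}.

Arguments idm {C} a : rename.
Arguments comp {C a b c} : rename.
Notation "g \oc f" := (comp g f) (at level 40, left associativity).

Section Defs.
Variable C : PreAdditive.
Implicit Types a b c : obj C.

Definition is_zero_obj (z : obj C) : Prop :=
  (forall a (f g : mor z a), f = g) /\ (forall a (f g : mor a z), f = g).

Definition is_iso a b (f : mor a b) : Prop :=
  exists g : mor b a, g \oc f = idm a /\ f \oc g = idm b.

Definition is_kernel a b c (i : mor a b) (p : mor b c) : Prop :=
  p \oc i = 0 /\
  forall x (t : mor x b), p \oc t = 0 -> exists! u : mor x a, i \oc u = t.

Definition is_cokernel a b c (i : mor a b) (p : mor b c) : Prop :=
  p \oc i = 0 /\
  forall x (t : mor b x), t \oc i = 0 -> exists! u : mor c x, u \oc p = t.

Definition kernel_cokernel_pair a b c (i : mor a b) (p : mor b c) : Prop :=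
  is_kernel i p /\ is_cokernel i p.

(* (P, p', f') is a pullback of p : b -> c along f : c' -> c:
      P --f'--> b
      |p'       |p
      c' --f--> c                                                        *)
Definition is_pullback b c c' P (p : mor b c) (f : mor c' c)
    (f' : mor P b) (p' : mor P c') : Prop :=
  p \oc f' = f \oc p' /\
  forall x (u : mor x b) (v : mor x c'), p \oc u = f \oc v ->
    exists! w : mor x P, f' \oc w = u /\ p' \oc w = v.

(* (P, d, m) is a pushout of a : c -> d0 along b : c -> a0:
      c  --a--> d0
      |b        |d
      a0 --m--> P                                                        *)
Definition is_pushout c d0 a0 P (a : mor c d0) (b : mor c a0)
    (d : mor d0 P) (m : mor a0 P) : Prop :=
  d \oc a = m \oc b /\
  forall x (u : mor d0 x) (v : mor a0 x), u \oc a = v \oc b ->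
    exists! w : mor P x, w \oc d = u /\ w \oc m = v.

End Defs.

Record Additive := {
  pre :> PreAdditive;
  zero_obj : obj pre;
  zero_objP : is_zero_obj zero_obj;
  biproducts : forall a b : obj pre, exists (s : obj pre)
      (i1 : mor a s) (i2 : mor b s) (p1 : mor s a) (p2 : mor s b),
      [/\ p1 \oc i1 = idm a, p2 \oc i2 = idm b, p1 \oc i2 = 0, p2 \oc i1 = 0
        & i1 \oc p1 + i2 \oc p2 = idm s]
}.

Record ConflationCat := {
  addc :> Additive;
  conf : forall a b c : obj addc, mor a b -> mor b c -> Prop;
  conf_kc : forall a b c (i : mor a b) (p : mor b c),
      conf i p -> kernel_cokernel_pair i p;
  conf_iso : forall a b c a' b' c' (i : mor a b) (p : mor b c)
      (i' : mor a' b') (p' : mor b' c')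
      (al : mor a a') (be : mor b b') (ga : mor c c'),
      is_iso al -> is_iso be -> is_iso ga ->
      be \oc i = i' \oc al -> ga \oc p = p' \oc be ->
      conf i p -> conf i' p'
}.

Section Conf.
Variable C : ConflationCat.

Definition inflation (a b : obj C) (i : mor a b) : Prop :=
  exists (c : obj C) (p : mor b c), conf i p.
Definition deflation (b c : obj C) (p : mor b c) : Prop :=
  exists (a : obj C) (i : mor a b), conf i p.

Definition deflation_exact : Prop :=
  deflation (idm (zero_obj C)) /\
  (forall a b c (p : mor a b) (q : mor b c),
               deflation p -> deflation q -> deflation (q \oc p)) /\
  (forall b c c' (p : mor b c) (f : mor c' c), deflation p ->
               exists (P : obj C) (f' : mor P b) (p' : mor P c'),
                 is_pullback p f f' p' /\ deflation p').

(* A full subcategory is given by a predicate on objects. *)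
Definition admissibly_deflation_percolating (A : obj C -> Prop) : Prop :=
  (exists a, A a) /\
  (forall a' a a'' (i : mor a' a) (p : mor a a''), conf i p ->
               (A a <-> A a' /\ A a'')) /\
  (forall c a (f : mor c a), A a ->
               exists (a' : obj C) (d : mor c a') (m : mor a' a),
                 [/\ A a', deflation d, inflation m & f = m \oc d]) /\
  (forall c d0 a0 (a : mor c d0) (b : mor c a0),
               inflation a -> deflation b -> A a0 ->
               exists (P : obj C) (d : mor d0 P) (m : mor a0 P),
                 [/\ is_pushout a b d m, deflation d & inflation m]).

Definition Ainv_inflation (A : obj C -> Prop) (a b : obj C) (i : mor a b) : Prop :=
  exists (c : obj C) (p : mor b c), conf i p /\ A c.
Definition Ainv_deflation (A : obj C -> Prop) (b c : obj C) (p : mor b c) : Prop :=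
  exists (a : obj C) (i : mor a b), conf i p /\ A a.

End Conf.

(* Pulling the lower conflation back along h gives a conflation X' >-> P ->> Z
   through which g factors as e \oc g1, where (f, g1, 1_Z) is again a morphism of
   conflations and e is the pullback of h; so it suffices to treat h = 1 and then
   to compose with e.
   Inflations: the pushout (A3) of X' >-> P along the deflation X' ->> B = coker f
   splits as Z (+) B, and g1 is the kernel of the induced deflation P ->> B.  A
   second pushout along this deflation composes g1 with the inflation e and puts
   B >-> coker g ->> coker h into a conflation.
   Deflations: P is the cokernel of X >-> X' (+) Y, and g1 composed with the
   projection X (+) Y ->> Y is this cokernel map after a pullback of f, hence a
   deflation; since ker g1 = ker f lies in A, pushing out along the projection
   onto ker f shows that g1 itself is a deflation.  The kernel of e \oc g1 is
   then the pullback of g1 along ker e, which puts ker f >-> ker g ->> ker h into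
   a conflation. *)

From Pilot Require Import Defs.
From mathcomp Require Import all_boot all_algebra.
Set Implicit Arguments. Unset Strict Implicit. Unset Printing Implicit Defensive.
Import GRing.Theory.
Local Open Scope ring_scope.

Section Preadditive.
Variable C : PreAdditive.
Implicit Types a b c x : obj C.

Lemma compm0 a b c (g : mor b c) : g \oc (0 : mor a b) = 0.
Proof. by apply: (@addrI _ (g \oc 0)); rewrite -compDr !addr0. Qed.

Lemma comp0m a b c (f : mor a b) : (0 : mor b c) \oc f = 0.
Proof. by apply: (@addrI _ (0 \oc f)); rewrite -compDl !addr0. Qed.

Lemma compmN a b c (g : mor b c) (f : mor a b) : g \oc (- f) = - (g \oc f).
Proof. by apply: (@addrI _ (g \oc f)); rewrite -compDr !subrr compm0. Qed.

Lemma compNm a b c (g : mor b c) (f : mor a b) : (- g) \oc f = - (g \oc f).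
Proof. by apply: (@addrI _ (g \oc f)); rewrite -compDl !subrr comp0m. Qed.

Lemma compmB a b c (g : mor b c) (f1 f2 : mor a b) :
  g \oc (f1 - f2) = g \oc f1 - g \oc f2.
Proof. by rewrite compDr compmN. Qed.

Lemma compBm a b c (g1 g2 : mor b c) (f : mor a b) :
  (g1 - g2) \oc f = g1 \oc f - g2 \oc f.
Proof. by rewrite compDl compNm. Qed.

Definition is_monic a b (i : mor a b) : Prop :=
  forall x (u v : mor x a), i \oc u = i \oc v -> u = v.

Definition is_epic b c (p : mor b c) : Prop :=
  forall x (u v : mor c x), u \oc p = v \oc p -> u = v.

Lemma monic0 a b x (i : mor a b) (u : mor x a) : is_monic i -> i \oc u = 0 -> u = 0.
Proof. by move=> mi iu0; apply: mi; rewrite iu0 compm0. Qed.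

Lemma is_monic_intro a b (i : mor a b) :
  (forall x (u : mor x a), i \oc u = 0 -> u = 0) -> is_monic i.
Proof.
move=> i0 x u v iuv; apply/eqP; rewrite -subr_eq0; apply/eqP.
by apply: i0; rewrite compmB iuv subrr.
Qed.

Lemma monic_comp a b c (i : mor a b) (j : mor b c) :
  is_monic i -> is_monic j -> is_monic (j \oc i).
Proof. by move=> mi mj x u v; rewrite -!Defs.compA => /mj /mi. Qed.

Lemma monic_compr a b c (i : mor a b) (j : mor b c) :
  is_monic (j \oc i) -> is_monic i.
Proof. by move=> mji x u v iuv; apply: mji; rewrite -!Defs.compA iuv. Qed.

Lemma kernel_monic a b c (i : mor a b) (p : mor b c) : is_kernel i p -> is_monic i.
Proof.
move=> [pi0 ker] x u v iuv.
have piu0 : p \oc (i \oc u) = 0 by rewrite Defs.compA pi0 comp0m.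
have [w [_ uniq_w]] := ker x _ piu0.
by rewrite -(uniq_w u erefl) (uniq_w v (esym iuv)).
Qed.

Lemma cokernel_epic a b c (i : mor a b) (p : mor b c) : is_cokernel i p -> is_epic p.
Proof.
move=> [pi0 coker] x u v upv.
have upi0 : (u \oc p) \oc i = 0 by rewrite -Defs.compA pi0 compm0.
have [w [_ uniq_w]] := coker x _ upi0.
by rewrite -(uniq_w u erefl) (uniq_w v (esym upv)).
Qed.

Lemma kernel_factor a b c x (i : mor a b) (p : mor b c) (t : mor x b) :
  is_kernel i p -> p \oc t = 0 -> exists u, i \oc u = t.
Proof. by move=> [_ ker] /ker [u [iu _]]; exists u. Qed.

Lemma cokernel_factor a b c x (i : mor a b) (p : mor b c) (t : mor b x) :
  is_cokernel i p -> t \oc i = 0 -> exists u, u \oc p = t.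
Proof. by move=> [_ coker] /coker [u [up _]]; exists u. Qed.

Lemma is_kernel_intro a b c (i : mor a b) (p : mor b c) :
  p \oc i = 0 -> is_monic i ->
  (forall x (t : mor x b), p \oc t = 0 -> exists u, i \oc u = t) ->
  is_kernel i p.
Proof.
move=> pi0 mi fact; split=> // x t /fact [u iu].
by exists u; split=> // u' iu'; apply: mi; rewrite iu iu'.
Qed.

Lemma is_cokernel_intro a b c (i : mor a b) (p : mor b c) :
  p \oc i = 0 -> is_epic p ->
  (forall x (t : mor b x), t \oc i = 0 -> exists u, u \oc p = t) ->
  is_cokernel i p.
Proof.
move=> pi0 ep fact; split=> // x t /fact [u up].
by exists u; split=> // u' u'p; apply: ep; rewrite up u'p.
Qed.

Lemma pullback_sym b c c' P (p : mor b c) (f : mor c' c) (f' : mor P b)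
    (p' : mor P c') :
  is_pullback p f f' p' -> is_pullback f p p' f'.
Proof.
move=> [sq pb]; split=> // x u v /esym /pb [w [[? ?] uniq_w]].
by exists w; split=> // w' [? ?]; apply: uniq_w.
Qed.

Lemma pullback_factor b c c' P x (p : mor b c) (f : mor c' c) (f' : mor P b)
    (p' : mor P c') (u : mor x b) (v : mor x c') :
  is_pullback p f f' p' -> p \oc u = f \oc v ->
  exists w, f' \oc w = u /\ p' \oc w = v.
Proof. by move=> [_ pb] /pb [w [fw _]]; exists w. Qed.

Lemma pullback_uniq b c c' P x (p : mor b c) (f : mor c' c) (f' : mor P b)
    (p' : mor P c') (w1 w2 : mor x P) :
  is_pullback p f f' p' -> f' \oc w1 = f' \oc w2 -> p' \oc w1 = p' \oc w2 ->
  w1 = w2.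
Proof.
move=> [sq pb] E1 E2.
have sqw : p \oc (f' \oc w1) = f \oc (p' \oc w1) by rewrite !Defs.compA sq.
have [w [_ uniq_w]] := pb x _ _ sqw.
by rewrite -(uniq_w w1 (conj erefl erefl)) (uniq_w w2 (conj (esym E1) (esym E2))).
Qed.

Lemma pushout_factor c d0 a0 P x (a : mor c d0) (b : mor c a0) (d : mor d0 P)
    (m : mor a0 P) (u : mor d0 x) (v : mor a0 x) :
  is_pushout a b d m -> u \oc a = v \oc b ->
  exists w, w \oc d = u /\ w \oc m = v.
Proof. by move=> [_ po] /po [w [wd _]]; exists w. Qed.

Lemma pushout_uniq c d0 a0 P x (a : mor c d0) (b : mor c a0) (d : mor d0 P)
    (m : mor a0 P) (w1 w2 : mor P x) :
  is_pushout a b d m -> w1 \oc d = w2 \oc d -> w1 \oc m = w2 \oc m -> w1 = w2.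
Proof.
move=> [sq po] E1 E2.
have sqw : (w1 \oc d) \oc a = (w1 \oc m) \oc b by rewrite -!Defs.compA sq.
have [w [_ uniq_w]] := po x _ _ sqw.
by rewrite -(uniq_w w1 (conj erefl erefl)) (uniq_w w2 (conj (esym E1) (esym E2))).
Qed.

Lemma pullback_kernel a b c c' P (p : mor b c) (h : mor c' c) (k : mor c a)
    (e : mor P b) (q : mor P c') :
  is_pullback p h e q -> is_kernel h k -> is_kernel e (k \oc p).
Proof.
move=> pb ker_h; have mh := kernel_monic ker_h.
apply: is_kernel_intro.
- by rewrite -Defs.compA pb.1 Defs.compA ker_h.1 comp0m.
- apply: is_monic_intro => x u eu0.
  apply: (pullback_uniq pb); first by rewrite eu0 compm0.
  rewrite compm0; apply: (monic0 mh).
  by rewrite Defs.compA -pb.1 -Defs.compA eu0 compm0.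
move=> x t; rewrite -Defs.compA => /(kernel_factor ker_h) [s hs].
by have [u [eu _]] := pullback_factor pb (esym hs); exists u.
Qed.

Lemma is_pullback_intro b c c' P (p : mor b c) (f : mor c' c) (f' : mor P b)
    (p' : mor P c') :
  p \oc f' = f \oc p' ->
  (forall x (w1 w2 : mor x P),
     f' \oc w1 = f' \oc w2 -> p' \oc w1 = p' \oc w2 -> w1 = w2) ->
  (forall x (u : mor x b) (v : mor x c'), p \oc u = f \oc v ->
     exists w, f' \oc w = u /\ p' \oc w = v) ->
  is_pullback p f f' p'.
Proof.
move=> sq uniq fact; split=> // x u v /fact [w [f'w p'w]].
by exists w; split=> // w' [f'w' p'w']; apply: uniq; rewrite ?f'w ?f'w' ?p'w ?p'w'.
Qed.

Definition is_biprod a b s (i1 : mor a s) (i2 : mor b s) (p1 : mor s a)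
    (p2 : mor s b) : Prop :=
  [/\ p1 \oc i1 = idm a, p2 \oc i2 = idm b, p1 \oc i2 = 0, p2 \oc i1 = 0
    & i1 \oc p1 + i2 \oc p2 = idm s].

Section Biproduct.
Variables (a b s : obj C) (i1 : mor a s) (i2 : mor b s) (p1 : mor s a)
  (p2 : mor s b).
Hypothesis biprod_s : is_biprod i1 i2 p1 p2.

Lemma biprod_ext x (u v : mor x s) :
  p1 \oc u = p1 \oc v -> p2 \oc u = p2 \oc v -> u = v.
Proof.
case: biprod_s => _ _ _ _ id_s E1 E2.
by rewrite -[u]comp1m -[v]comp1m -id_s !compDl -!Defs.compA E1 E2.
Qed.

Lemma biprod_pair1 x (u : mor x a) (v : mor x b) :
  p1 \oc (i1 \oc u + i2 \oc v) = u.
Proof.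
case: biprod_s => p1i1 _ p1i2 _ _.
by rewrite compDr !Defs.compA p1i1 p1i2 comp1m comp0m addr0.
Qed.

Lemma biprod_pair2 x (u : mor x a) (v : mor x b) :
  p2 \oc (i1 \oc u + i2 \oc v) = v.
Proof.
case: biprod_s => _ p2i2 _ p2i1 _.
by rewrite compDr !Defs.compA p2i2 p2i1 comp1m comp0m add0r.
Qed.

Lemma biprod_copair1 x (u : mor a x) (v : mor b x) :
  (u \oc p1 + v \oc p2) \oc i1 = u.
Proof.
case: biprod_s => p1i1 _ _ p2i1 _.
by rewrite compDl -!Defs.compA p1i1 p2i1 compm1 compm0 addr0.
Qed.

Lemma biprod_copair2 x (u : mor a x) (v : mor b x) :
  (u \oc p1 + v \oc p2) \oc i2 = v.
Proof.
case: biprod_s => _ p2i2 p1i2 _ _.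
by rewrite compDl -!Defs.compA p2i2 p1i2 compm1 compm0 add0r.
Qed.

End Biproduct.

Lemma biprod_pullback a b c d s (j : mor a c) (q : mor c d) (g : mor b c)
    (i1 : mor a s) (i2 : mor b s) (p1 : mor s a) (p2 : mor s b) :
  is_biprod i1 i2 p1 p2 -> is_kernel j q ->
  is_pullback (q \oc g) q p2 (j \oc p1 + g \oc p2).
Proof.
move=> bs ker_j; apply: is_pullback_intro.
- by rewrite compDr !Defs.compA ker_j.1 comp0m add0r.
- move=> x w1 w2 E2 E; apply: (biprod_ext bs) => //.
  apply: (kernel_monic ker_j); apply: (@addIr _ (g \oc (p2 \oc w1))).
  by rewrite {2}E2 !Defs.compA -!compDl.
move=> x u v qgu.
have [w1 jw1] : exists w1, j \oc w1 = v - g \oc u.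
  by apply: (kernel_factor ker_j); rewrite compmB Defs.compA qgu subrr.
exists (i1 \oc w1 + i2 \oc u); rewrite (biprod_pair2 bs); split=> //.
by rewrite compDl -!Defs.compA (biprod_pair1 bs) (biprod_pair2 bs) jw1 subrK.
Qed.

Lemma biprod_shear_pullback a a' b s s' (f : mor a a') (i : mor a b)
    (i1 : mor a' s') (i2 : mor b s') (p1 : mor s' a') (p2 : mor s' b)
    (r1 : mor a s) (r2 : mor b s) (q1 : mor s a) (q2 : mor s b) :
  is_biprod i1 i2 p1 p2 -> is_biprod r1 r2 q1 q2 ->
  is_pullback f p1 q1 (i1 \oc (f \oc q1) + i2 \oc (q2 - i \oc q1)).
Proof.
move=> bs' bs; apply: is_pullback_intro.
- by rewrite (biprod_pair1 bs').
- move=> x w1 w2 E1 E; apply: (biprod_ext bs) => //.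
  move/(congr1 (Defs.comp p2)): E.
  by rewrite !(Defs.compA p2) (biprod_pair2 bs') !compBm -!Defs.compA E1 => /addIr.
move=> x u v fu.
exists (r1 \oc u + r2 \oc (p2 \oc v + i \oc u)); rewrite (biprod_pair1 bs).
split=> //; apply: (biprod_ext bs').
  by rewrite Defs.compA (biprod_pair1 bs') -Defs.compA (biprod_pair1 bs).
rewrite Defs.compA (biprod_pair2 bs') compBm -!Defs.compA.
by rewrite (biprod_pair1 bs) (biprod_pair2 bs) addrK.
Qed.

Lemma biprod_kernel a b c s s' d (r1 : mor a s) (r2 : mor b s) (q1 : mor s a)
    (q2 : mor s b) (t1 : mor a s') (t2 : mor c s') (s1 : mor s' a)
    (s2 : mor s' c) (u : mor c b) (g : mor b d) :
  is_biprod r1 r2 q1 q2 -> is_biprod t1 t2 s1 s2 -> is_kernel u g ->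
  is_kernel (r1 \oc s1 + r2 \oc (u \oc s2)) (g \oc q2).
Proof.
move=> bs bs' ker_u; apply: is_kernel_intro.
- by rewrite -Defs.compA (biprod_pair2 bs) Defs.compA ker_u.1 comp0m.
- apply: is_monic_intro => x v cv0.
  have s1v : s1 \oc v = 0.
    move/(congr1 (Defs.comp q1)): cv0.
    by rewrite Defs.compA (biprod_pair1 bs) compm0.
  have s2v : s2 \oc v = 0.
    apply: (monic0 (kernel_monic ker_u)).
    move/(congr1 (Defs.comp q2)): cv0.
    by rewrite Defs.compA (biprod_pair2 bs) compm0 -Defs.compA.
  by apply: (biprod_ext bs'); rewrite compm0.
move=> x t; rewrite -Defs.compA => /(kernel_factor ker_u) [z uz].
exists (t1 \oc (q1 \oc t) + t2 \oc z); apply: (biprod_ext bs).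
  by rewrite Defs.compA (biprod_pair1 bs) (biprod_pair1 bs').
by rewrite Defs.compA (biprod_pair2 bs) -Defs.compA (biprod_pair2 bs') uz.
Qed.

End Preadditive.

Section Conflations.
Variable C : ConflationCat.
Implicit Types a b c x : obj C.

Lemma conf_kernel a b c (i : mor a b) (p : mor b c) : conf i p -> is_kernel i p.
Proof. by case/conf_kc. Qed.

Lemma conf_cokernel a b c (i : mor a b) (p : mor b c) : conf i p -> is_cokernel i p.
Proof. by case/conf_kc. Qed.

Lemma conf_comp0 a b c (i : mor a b) (p : mor b c) : conf i p -> p \oc i = 0.
Proof. by case/conf_kernel. Qed.

Lemma conf_monic a b c (i : mor a b) (p : mor b c) : conf i p -> is_monic i.
Proof. by move/conf_kernel/kernel_monic. Qed.

Lemma conf_epic a b c (i : mor a b) (p : mor b c) : conf i p -> is_epic p.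
Proof. by move/conf_cokernel/cokernel_epic. Qed.

Lemma conf_inflation a b c (i : mor a b) (p : mor b c) : conf i p -> inflation i.
Proof. by move=> ip; exists c, p. Qed.

Lemma conf_deflation a b c (i : mor a b) (p : mor b c) : conf i p -> deflation p.
Proof. by move=> ip; exists a, i. Qed.

Lemma deflation_epic b c (p : mor b c) : deflation p -> is_epic p.
Proof. by case=> a [i /conf_epic]. Qed.

Lemma is_iso_idm a : is_iso (idm a).
Proof. by exists (idm a); rewrite comp1m. Qed.

Lemma kernel_conf a a2 b c (i : mor a b) (i2 : mor a2 b) (p : mor b c) :
  conf i p -> is_kernel i2 p -> conf i2 p.
Proof.
move=> ip ker2; have ker := conf_kernel ip.
have [al i2al] := kernel_factor ker2 (conf_comp0 ip).
have [be ibe] := kernel_factor ker ker2.1.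
apply: (conf_iso (al := al) (be := idm b) (ga := idm c) _ _ _ _ _ ip).
- exists be; split.
  + by apply: (kernel_monic ker); rewrite Defs.compA ibe i2al compm1.
  + by apply: (kernel_monic ker2); rewrite Defs.compA i2al ibe compm1.
- exact: is_iso_idm.
- exact: is_iso_idm.
- by rewrite comp1m i2al.
- by rewrite comp1m compm1.
Qed.

Lemma cokernel_conf a b c c2 (i : mor a b) (p : mor b c) (p2 : mor b c2) :
  conf i p -> is_cokernel i p2 -> conf i p2.
Proof.
move=> ip coker2; have coker := conf_cokernel ip.
have [ga gap] := cokernel_factor coker coker2.1.
have [be bep2] := cokernel_factor coker2 (conf_comp0 ip).
apply: (conf_iso (al := idm a) (be := idm b) (ga := ga) _ _ _ _ _ ip).
- exact: is_iso_idm.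
- exact: is_iso_idm.
- exists be; split.
  + by apply: (cokernel_epic coker); rewrite -Defs.compA gap bep2 comp1m.
  + by apply: (cokernel_epic coker2); rewrite -Defs.compA bep2 gap comp1m.
- by rewrite comp1m compm1.
- by rewrite gap compm1.
Qed.

Lemma deflation_kernel_conf a b c (i : mor a b) (p : mor b c) :
  deflation p -> is_kernel i p -> conf i p.
Proof. by case=> a' [i' /kernel_conf]; apply. Qed.

Lemma inflation_cokernel_conf a b c (i : mor a b) (p : mor b c) :
  inflation i -> is_cokernel i p -> conf i p.
Proof. by case=> c' [p' /cokernel_conf]; apply. Qed.

Lemma deflation_comp_iso a b c (d : mor b c) (th : mor a b) :
  deflation d -> is_iso th -> deflation (d \oc th).
Proof.
case=> k [i ki] [th' [th'th thth']]; exists k, (th' \oc i).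
apply: (conf_iso (al := idm k) (be := th') (ga := idm c) _ _ _ _ _ ki).
- exact: is_iso_idm.
- by exists th.
- exact: is_iso_idm.
- by rewrite compm1.
- by rewrite comp1m -Defs.compA thth' compm1.
Qed.

Lemma iso_comp_deflation b c c' (d : mor b c) (th : mor c c') :
  deflation d -> is_iso th -> deflation (th \oc d).
Proof.
case=> k [i ki] iso_th; exists k, i.
apply: (conf_iso (al := idm k) (be := idm b) (ga := th) _ _ _ _ _ ki) => //.
- exact: is_iso_idm.
- exact: is_iso_idm.
- by rewrite comp1m compm1.
- by rewrite compm1.
Qed.

Lemma iso_comp_inflation a b b' (m : mor a b) (w : mor b b') :
  inflation m -> is_iso w -> inflation (w \oc m).
Proof.
case=> c [p mp] [w' [w'w ww']]; exists c, (p \oc w').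
apply: (conf_iso (al := idm a) (be := w) (ga := idm c) _ _ _ _ _ mp).
- exact: is_iso_idm.
- by exists w'.
- exact: is_iso_idm.
- by rewrite compm1.
- by rewrite comp1m -Defs.compA w'w compm1.
Qed.

Lemma deflation_factor_monic a b c x (g : mor a b) (t : mor c b) (tau : mor x c)
    (v : mor x a) :
  is_monic g -> deflation tau -> t \oc tau = g \oc v -> exists u, g \oc u = t.
Proof.
move=> mg [K [k ktau]] ttau.
have [u utau] : exists u, u \oc tau = v.
  apply: (cokernel_factor (conf_cokernel ktau)); apply: (monic0 mg).
  by rewrite Defs.compA -ttau -Defs.compA (conf_comp0 ktau) compm0.
by exists u; apply: (conf_epic ktau); rewrite -Defs.compA utau ttau.
Qed.

Lemma conf_map1_monic (X Y Z X' P : obj C) (i : mor X Y) (p : mor Y Z)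
    (j : mor X' P) (q : mor P Z) (f : mor X X') (g : mor Y P) :
  conf i p -> conf j q -> g \oc i = j \oc f -> q \oc g = p -> is_monic f ->
  is_monic g.
Proof.
move=> ip jq gi qg mf; apply: is_monic_intro => x u gu0.
have [v iv] : exists v, i \oc v = u.
  by apply: (kernel_factor (conf_kernel ip)); rewrite -qg -Defs.compA gu0 compm0.
have fv0 : f \oc v = 0.
  by apply: (monic0 (conf_monic jq)); rewrite Defs.compA -gi -Defs.compA iv.
by rewrite -iv (monic0 mf fv0) compm0.
Qed.

Lemma pushout_biprod (X Y Z X' P B Q Q' : obj C) (i : mor X Y) (p : mor Y Z)
    (j : mor X' P) (q : mor P Z) (f : mor X X') (g : mor Y P) (a : mor X' B)
    (d : mor P Q) (m : mor B Q) (c : mor Q Q') :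
  conf i p -> conf j q -> g \oc i = j \oc f -> q \oc g = p -> conf f a ->
  is_pushout j a d m -> deflation d -> conf m c ->
  exists (r : mor Q Z) (s : mor Z Q) (rho : mor Q B),
    [/\ is_biprod s m r rho, r \oc d = q & s \oc p = d \oc g].
Proof.
move=> ip jq gi qg fa po dd mc.
have [r [rd rm]] : exists r : mor Q Z, r \oc d = q /\ r \oc m = 0.
  by apply: (pushout_factor po); rewrite (conf_comp0 jq) comp0m.
have [s sp] : exists s : mor Z Q, s \oc p = d \oc g.
  apply: (cokernel_factor (conf_cokernel ip)).
  by rewrite -Defs.compA gi Defs.compA po.1 -Defs.compA (conf_comp0 fa) compm0.
have rs : r \oc s = idm Z.
  by apply: (conf_epic ip); rewrite -Defs.compA sp Defs.compA rd qg comp1m.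
have [phi phiq] : exists phi, phi \oc q = c \oc d.
  apply: (cokernel_factor (conf_cokernel jq)).
  by rewrite -Defs.compA po.1 Defs.compA (conf_comp0 mc) comp0m.
have cr : c = phi \oc r by apply: (deflation_epic dd); rewrite -Defs.compA rd phiq.
have [rho mrho] : exists rho, m \oc rho = idm Q - s \oc r.
  apply: (kernel_factor (conf_kernel mc)).
  by rewrite compmB compm1 cr !Defs.compA -(Defs.compA phi r s) rs compm1 subrr.
exists r, s, rho; split=> //; split=> //.
- apply: (conf_monic mc).
  by rewrite Defs.compA mrho compBm comp1m -Defs.compA rm compm0 subr0 compm1.
- apply: (monic0 (conf_monic mc)).
  by rewrite Defs.compA mrho compBm comp1m -Defs.compA rs compm1 subrr.
- by rewrite mrho addrC subrK.
Qed.

Section DeflationExact.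
Hypothesis HE : deflation_exact C.

Lemma deflation_comp a b c (p : mor a b) (q : mor b c) :
  deflation p -> deflation q -> deflation (q \oc p).
Proof. exact: HE.2.1. Qed.

Lemma deflation_pullback b c c' (p : mor b c) (f : mor c' c) :
  deflation p ->
  exists P (f' : mor P b) (p' : mor P c'), is_pullback p f f' p' /\ deflation p'.
Proof. exact: HE.2.2. Qed.

Lemma pullback_deflation b c c' P (p : mor b c) (f : mor c' c) (f' : mor P b)
    (p' : mor P c') :
  deflation p -> is_pullback p f f' p' -> deflation p'.
Proof.
move=> dp pb.
have [P1 [f1 [p1 [pb1 dp1]]]] := deflation_pullback f dp.
have [th [f1th p1th]] := pullback_factor pb1 pb.1.
have [th' [f'th' p'th']] := pullback_factor pb pb1.1.
rewrite -p1th; apply: deflation_comp_iso dp1 _; exists th'; split.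
- by apply: (pullback_uniq pb); rewrite compm1 Defs.compA ?f'th' ?p'th'.
- by apply: (pullback_uniq pb1); rewrite compm1 Defs.compA ?f1th ?p1th.
Qed.

Lemma pullback_conf a b c c' P (i : mor a b) (p : mor b c) (f : mor c' c)
    (f' : mor P b) (p' : mor P c') :
  conf i p -> is_pullback p f f' p' ->
  exists w : mor a P, [/\ conf w p', f' \oc w = i & p' \oc w = 0].
Proof.
move=> ip pb.
have [w [f'w p'w]] : exists w, f' \oc w = i /\ p' \oc w = 0.
  by apply: (pullback_factor pb); rewrite compm0 (conf_comp0 ip).
exists w; split=> //.
apply: deflation_kernel_conf; first exact: pullback_deflation (conf_deflation ip) pb.
apply: is_kernel_intro => //.
  by apply: (monic_compr (j := f')); rewrite f'w; apply: conf_monic ip.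
move=> x t p't0.
have [s is_f't] : exists s, i \oc s = f' \oc t.
  apply: (kernel_factor (conf_kernel ip)).
  by rewrite Defs.compA pb.1 -Defs.compA p't0 compm0.
exists s; apply: (pullback_uniq pb); first by rewrite Defs.compA f'w.
by rewrite Defs.compA p'w comp0m.
Qed.

Lemma pullback_conf_comp a b c c' P (p : mor b c) (h : mor c' c) (k : mor c a)
    (e : mor P b) (q : mor P c') :
  conf h k -> is_pullback p h e q -> deflation p -> conf e (k \oc p).
Proof.
move=> hk pb dp; apply: deflation_kernel_conf.
  exact: deflation_comp dp (conf_deflation hk).
exact: pullback_kernel pb (conf_kernel hk).
Qed.

Lemma conf_map_factor (X Y Z X' Y' Z' : obj C) (i : mor X Y) (p : mor Y Z)
    (i' : mor X' Y') (p' : mor Y' Z') (f : mor X X') (g : mor Y Y') (h : mor Z Z') :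
  conf i p -> conf i' p' -> g \oc i = i' \oc f -> h \oc p = p' \oc g ->
  exists P (e : mor P Y') (q : mor P Z) (j : mor X' P) (g1 : mor Y P),
    [/\ is_pullback p' h e q, conf j q, e \oc g1 = g, q \oc g1 = p
      & g1 \oc i = j \oc f].
Proof.
move=> ip i'p' gi hp.
have [P [e [q [pb _]]]] := deflation_pullback h (conf_deflation i'p').
have [j [jq ej qj]] := pullback_conf i'p' pb.
have [g1 [eg1 qg1]] := pullback_factor pb (esym hp).
exists P, e, q, j, g1; split=> //.
apply: (pullback_uniq pb); first by rewrite !Defs.compA eg1 ej gi.
by rewrite !Defs.compA qg1 qj (conf_comp0 ip) comp0m.
Qed.

Lemma conf_comp_deflation (W P Y' B Y : obj C) (w : mor W P) (e : mor P Y')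
    (b : mor B Y) (g : mor Y P) :
  conf w e -> conf b g ->
  exists K (y : mor K Y) (m : mor B K) (v : mor K W),
    conf y (e \oc g) /\ conf m v.
Proof.
move=> we bg.
have [K [y [v [pb _]]]] := deflation_pullback w (conf_deflation bg).
have [m [mv _ _]] := pullback_conf bg pb.
exists K, y, m, v; split=> //.
exact: pullback_conf_comp we pb (conf_deflation bg).
Qed.

Section Percolating.
Variable A : obj C -> Prop.
Hypothesis HA : admissibly_deflation_percolating A.

Lemma percolating_conf a' a a'' (i : mor a' a) (p : mor a a'') :
  conf i p -> A a <-> A a' /\ A a''.
Proof. exact: HA.2.1. Qed.

Lemma percolating_factor c a (f : mor c a) :
  A a -> exists a' (d : mor c a') (m : mor a' a),
    [/\ A a', deflation d, inflation m & f = m \oc d].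
Proof. exact: HA.2.2.1. Qed.

Lemma percolating_pushout c d0 a0 (a : mor c d0) (b : mor c a0) :
  inflation a -> deflation b -> A a0 ->
  exists P (d : mor d0 P) (m : mor a0 P),
    [/\ is_pushout a b d m, deflation d & inflation m].
Proof. exact: HA.2.2.2. Qed.

(* By (A2) a retraction onto an object of A factors as a deflation followed by an
   inflation that is split epi, hence invertible. *)
Lemma retraction_deflation b c (r : mor c b) (m : mor b c) :
  A b -> r \oc m = idm b -> deflation r.
Proof.
move=> Ab rm.
have [b' [d [m' [_ dd [c' [p' m'p']] Er]]]] := percolating_factor r Ab.
rewrite Er in rm *; apply: iso_comp_deflation dd _.
exists (d \oc m); split; last by rewrite Defs.compA.
by apply: (conf_monic m'p'); rewrite !Defs.compA rm comp1m compm1.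
Qed.

Lemma conf_comp_Ainv_inflation (Y P Y' W B : obj C) (g : mor Y P) (r : mor P B)
    (e : mor P Y') (c : mor Y' W) :
  conf g r -> A B -> conf e c ->
  exists Q (d : mor Y' Q) (m : mor B Q) (w : mor Q W),
    conf (e \oc g) d /\ conf m w.
Proof.
move=> gr AB ec.
have [Q [d [m [po dd [Q' [cm mcm]]]]]] :=
  percolating_pushout (conf_inflation ec) (conf_deflation gr) AB.
have [w [wd wm]] : exists w, w \oc d = c /\ w \oc m = 0.
  by apply: (pushout_factor po); rewrite (conf_comp0 ec) comp0m.
exists Q, d, m, w; split.
- apply: (deflation_kernel_conf dd); apply: is_kernel_intro.
  + by rewrite Defs.compA po.1 -Defs.compA (conf_comp0 gr) compm0.
  + exact: monic_comp (conf_monic gr) (conf_monic ec).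
  move=> x t dt0.
  have [s es] : exists s, e \oc s = t.
    by apply: (kernel_factor (conf_kernel ec)); rewrite -wd -Defs.compA dt0 compm0.
  have [u gu] : exists u, g \oc u = s.
    apply: (kernel_factor (conf_kernel gr)); apply: (monic0 (conf_monic mcm)).
    by rewrite Defs.compA -po.1 -Defs.compA es.
  by exists u; rewrite -Defs.compA gu.
- apply: (inflation_cokernel_conf (conf_inflation mcm)); apply: is_cokernel_intro.
  + exact: wm.
  + by move=> x u v uwvw; apply: (conf_epic ec); rewrite -wd !Defs.compA uwvw.
  move=> x t tm0.
  have [s sc] : exists s, s \oc c = t \oc d.
    apply: (cokernel_factor (conf_cokernel ec)).
    by rewrite -Defs.compA po.1 Defs.compA tm0 comp0m.
  by exists s; apply: (deflation_epic dd); rewrite -Defs.compA wd.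
Qed.

(* The kernel of [g \oc q2] is [1 (+) u]; pushing it out along the projection
   onto [B] recovers [u], which is therefore an inflation. *)
Lemma split_deflation_conf (X Y S B P : obj C) (r1 : mor X S) (r2 : mor Y S)
    (q1 : mor S X) (q2 : mor S Y) (u : mor B Y) (g : mor Y P) :
  is_biprod r1 r2 q1 q2 -> A B -> is_kernel u g -> deflation (g \oc q2) ->
  conf u g.
Proof.
move=> bs AB ker_u dgq2.
have [S' [t1 [t2 [s1 [s2 bs']]]]] := biproducts X B.
have [_ q2r2 _ _ id_S] := bs; have [_ s2t2 _ s2t1 _] := bs'.
pose c := r1 \oc s1 + r2 \oc (u \oc s2).
have cgq2 : conf c (g \oc q2).
  exact: deflation_kernel_conf dgq2 (biprod_kernel bs bs' ker_u).
have [Q [d [m [po _ im]]]] := percolating_pushout (conf_inflation cgq2)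
  (retraction_deflation AB s2t2) AB.
have [w [wd wm]] : exists w, w \oc d = q2 /\ w \oc m = u.
  by apply: (pushout_factor po); rewrite (biprod_pair2 bs).
have ct1 : c \oc t1 = r1 by rewrite /c Defs.compA (biprod_copair1 bs').
have ct2 : c \oc t2 = r2 \oc u by rewrite /c Defs.compA (biprod_copair2 bs').
have dr2q2 : d \oc r2 \oc q2 = d.
  rewrite -{2}[d]compm1 -id_S compDr !Defs.compA -ct1 (Defs.compA d c) po.1.
  by rewrite -(Defs.compA m) s2t1 compm0 comp0m add0r.
have iso_w : is_iso w.
  exists (d \oc r2); split; last by rewrite Defs.compA wd q2r2.
  apply: (pushout_uniq po); rewrite comp1m -Defs.compA ?wd ?wm; first exact: dr2q2.
  by rewrite -Defs.compA -ct2 Defs.compA po.1 -Defs.compA s2t2 compm1.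
have iu : inflation u by rewrite -wm; exact: iso_comp_inflation.
apply: (inflation_cokernel_conf iu); apply: is_cokernel_intro.
- exact: ker_u.1.
- move=> x v1 v2 E; apply: (deflation_epic dgq2).
  by rewrite !Defs.compA E.
move=> x t tu0.
have [v vgq2] : exists v, v \oc (g \oc q2) = t \oc q2.
  apply: (cokernel_factor (conf_cokernel cgq2)).
  by rewrite -Defs.compA (biprod_pair2 bs) Defs.compA tu0 comp0m.
exists v; rewrite -[t]compm1 -q2r2 Defs.compA -vgq2.
by rewrite -!Defs.compA q2r2 compm1.
Qed.

Lemma conf_map1_Ainv_inflation (X Y Z X' P B : obj C) (i : mor X Y) (p : mor Y Z)
    (j : mor X' P) (q : mor P Z) (f : mor X X') (g : mor Y P) (a : mor X' B) :
  conf i p -> conf j q -> g \oc i = j \oc f -> q \oc g = p -> conf f a -> A B ->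
  exists r : mor P B, conf g r.
Proof.
move=> ip jq gi qg fa AB.
have [Q [d [m [po dd [Q' [c mc]]]]]] :=
  percolating_pushout (conf_inflation jq) (conf_deflation fa) AB.
have [r [s [rho [[_ rhom _ rhos id_Q] rd sp]]]] :=
  pushout_biprod ip jq gi qg fa po dd mc.
have mg : is_monic g := conf_map1_monic ip jq gi qg (conf_monic fa).
have ker_d : forall x (t : mor x P), d \oc t = 0 -> exists v, g \oc (i \oc v) = t.
  move=> x t dt0.
  have [v jv] : exists v, j \oc v = t.
    by apply: (kernel_factor (conf_kernel jq)); rewrite -rd -Defs.compA dt0 compm0.
  have [v' fv'] : exists v', f \oc v' = v.
    apply: (kernel_factor (conf_kernel fa)); apply: (monic0 (conf_monic mc)).
    by rewrite Defs.compA -po.1 -Defs.compA jv.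
  by exists v'; rewrite Defs.compA gi -Defs.compA fv' jv.
exists (rho \oc d); apply: deflation_kernel_conf.
  exact: deflation_comp dd (retraction_deflation AB rhom).
apply: is_kernel_intro => //.
  by rewrite -Defs.compA -sp Defs.compA rhos comp0m.
move=> x t rdt0.
have dt : d \oc t = s \oc (q \oc t).
  rewrite -[d \oc t]comp1m -id_Q compDl -!Defs.compA (Defs.compA rho d t) rdt0.
  by rewrite compm0 addr0 (Defs.compA r d t) rd.
(* [t] factors through [g] after the deflation [tau] pulling [p] back along [q t]. *)
have [T [y [tau [pb dtau]]]] := deflation_pullback (q \oc t) (conf_deflation ip).
have [v gv] : exists v, g \oc (i \oc v) = t \oc tau - g \oc y.
  apply: ker_d; rewrite compmB !Defs.compA dt -sp -(Defs.compA s p y) pb.1.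
  by rewrite !Defs.compA subrr.
apply: (deflation_factor_monic mg dtau (v := y + i \oc v)).
by rewrite compDr gv addrC subrK.
Qed.

Lemma conf_map1_Ainv_deflation (X Y Z X' P B : obj C) (i : mor X Y) (p : mor Y Z)
    (j : mor X' P) (q : mor P Z) (f : mor X X') (g : mor Y P) (a : mor B X) :
  conf i p -> conf j q -> g \oc i = j \oc f -> q \oc g = p -> conf a f -> A B ->
  conf (i \oc a) g.
Proof.
move=> ip jq gi qg af AB.
have [S [i1 [i2 [p1 [p2 bs]]]]] := biproducts X' Y.
have [_ p2i2 p1i2 _ _] := bs.
pose Phi := j \oc p1 + g \oc p2.
have pbPhi : is_pullback p q p2 Phi.
  by rewrite -qg; exact: biprod_pullback bs (conf_kernel jq).
have [k [kPhi p2k Phik]] := pullback_conf ip pbPhi.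
have p1k : p1 \oc k = - f.
  apply: (conf_monic jq); apply/eqP; rewrite compmN -gi -p2k -addr_eq0; apply/eqP.
  by rewrite !Defs.compA -compDl.
have ker_g : is_kernel (i \oc a) g.
  apply: is_kernel_intro.
  - by rewrite Defs.compA gi -Defs.compA (conf_comp0 af) compm0.
  - exact: monic_comp (conf_monic af) (conf_monic ip).
  move=> x t gt0.
  have [v kv] : exists v, k \oc v = i2 \oc t.
    apply: (kernel_factor (conf_kernel kPhi)).
    by rewrite /Phi Defs.compA (biprod_copair2 bs).
  have [w aw] : exists w, a \oc w = v.
    apply: (kernel_factor (conf_kernel af)); apply/eqP; rewrite -oppr_eq0 -compNm.
    by rewrite -p1k -Defs.compA kv Defs.compA p1i2 comp0m.
  by exists w; rewrite -Defs.compA aw -p2k -Defs.compA kv Defs.compA p2i2 comp1m.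
have [S' [r1 [r2 [q1 [q2 bs']]]]] := biproducts X Y.
apply: (split_deflation_conf bs' AB ker_g).
have -> : g \oc q2 = Phi \oc (i1 \oc (f \oc q1) + i2 \oc (q2 - i \oc q1)).
  rewrite /Phi compDl -!Defs.compA (biprod_pair1 bs) (biprod_pair2 bs) compmB.
  by rewrite !Defs.compA gi addrC subrK.
apply: (deflation_comp _ (conf_deflation kPhi)).
apply: (pullback_deflation (conf_deflation af)).
exact: biprod_shear_pullback bs bs'.
Qed.

Lemma conf_map_Ainv_inflation (X Y Z X' Y' Z' B W : obj C) (i : mor X Y)
    (p : mor Y Z) (i' : mor X' Y') (p' : mor Y' Z') (f : mor X X') (g : mor Y Y')
    (h : mor Z Z') (a : mor X' B) (k : mor Z' W) :
  conf i p -> conf i' p' -> g \oc i = i' \oc f -> h \oc p = p' \oc g ->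
  conf f a -> A B -> conf h k ->
  exists Q (d : mor Y' Q) (m : mor B Q) (w : mor Q W), conf g d /\ conf m w.
Proof.
move=> ip i'p' gi hp fa AB hk.
have [P [e [q [j [g1 [pb jq eg1 qg1 g1i]]]]]] := conf_map_factor ip i'p' gi hp.
have [r g1r] := conf_map1_Ainv_inflation ip jq g1i qg1 fa AB.
have ekp' := pullback_conf_comp hk pb (conf_deflation i'p').
by rewrite -eg1; apply: conf_comp_Ainv_inflation g1r AB ekp'.
Qed.

Lemma conf_map_Ainv_deflation (X Y Z X' Y' Z' B W : obj C) (i : mor X Y)
    (p : mor Y Z) (i' : mor X' Y') (p' : mor Y' Z') (f : mor X X') (g : mor Y Y')
    (h : mor Z Z') (a : mor B X) (k : mor W Z) :
  conf i p -> conf i' p' -> g \oc i = i' \oc f -> h \oc p = p' \oc g ->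
  conf a f -> A B -> conf k h ->
  exists K (y : mor K Y) (m : mor B K) (w : mor K W), conf y g /\ conf m w.
Proof.
move=> ip i'p' gi hp af AB kh.
have [P [e [q [j [g1 [pb jq eg1 qg1 g1i]]]]]] := conf_map_factor ip i'p' gi hp.
have iag1 := conf_map1_Ainv_deflation ip jq g1i qg1 af AB.
have [w [we _ _]] := pullback_conf kh (pullback_sym pb).
by rewrite -eg1; apply: conf_comp_deflation we iag1.
Qed.

End Percolating.
End DeflationExact.
End Conflations.

Theorem mainTheorem13 (C : ConflationCat) (A : obj C -> Prop) :
  deflation_exact C -> admissibly_deflation_percolating A ->
  (forall (X Y Z X' Y' Z' : obj C)
          (i : mor X Y) (p : mor Y Z) (i' : mor X' Y') (p' : mor Y' Z')
          (f : mor X X') (g : mor Y Y') (h : mor Z Z'),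
     conf i p -> conf i' p' ->
     g \oc i = i' \oc f -> h \oc p = p' \oc g ->
     inflation f -> inflation h ->
     (Ainv_inflation A f -> inflation g) /\
     (Ainv_inflation A f -> Ainv_inflation A h -> Ainv_inflation A g)) /\
  (forall (X Y Z X' Y' Z' : obj C)
          (i : mor X Y) (p : mor Y Z) (i' : mor X' Y') (p' : mor Y' Z')
          (f : mor X X') (g : mor Y Y') (h : mor Z Z'),
     conf i p -> conf i' p' ->
     g \oc i = i' \oc f -> h \oc p = p' \oc g ->
     deflation f -> deflation h ->
     (Ainv_deflation A f -> deflation g) /\
     (Ainv_deflation A f -> Ainv_deflation A h -> Ainv_deflation A g)).
Proof.
move=> HE HA; split=> X Y Z X' Y' Z' i p i' p' f g h ip i'p' gi hp _ [W [k hW]].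
- split=> [[B [a [fa AB]]] | [B [a [fa AB]]] [W' [k' [hk' AW']]]].
  + have [Q [d [_ [_ [gd _]]]]] :=
      conf_map_Ainv_inflation HE HA ip i'p' gi hp fa AB hW.
    by exists Q, d.
  + have [Q [d [m [w [gd mw]]]]] :=
      conf_map_Ainv_inflation HE HA ip i'p' gi hp fa AB hk'.
    by exists Q, d; split=> //; apply/(percolating_conf HA mw).
- split=> [[B [a [af AB]]] | [B [a [af AB]]] [W' [k' [kh' AW']]]].
  + have [K [y [_ [_ [yg _]]]]] :=
      conf_map_Ainv_deflation HE HA ip i'p' gi hp af AB hW.
    by exists K, y.
  + have [K [y [m [w [yg mw]]]]] :=
      conf_map_Ainv_deflation HE HA ip i'p' gi hp af AB kh'.
    by exists K, y; split=> //; apply/(percolating_conf HA mw).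
Qed.
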